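(* Let $f:X\to Y$ be a closed, injective, $SC^*$-irresolute function between topological spaces. If $Y$ is $SC^*$-regular, then $X$ is $SC^*$-regular.
   Context: For $A\subseteq Z$ in a topological space $Z$: $A$ is semi-open if $A\subseteq cl(int(A))$, semi-closed if its complement is semi-open; $scl(A)$ is the smallest semi-closed set containing $A$. $A$ is $c^*$-open if $int(cl(A))\subseteq A\subseteq cl(int(A))$. $A$ is $SC^*$-closed if $scl(A)\subseteq U$ whenever $A\subseteq U$ and $U$ is $c^*$-open; $A$ is $SC^*$-open if $Z\setminus A$ is $SC^*$-closed. $f$ is $SC^*$-irresolute if $f^{-1}(N)$ is $SC^*$-open in $X$ for every $SC^*$-open $N\subseteq Y$. $Z$ is $SC^*$-regular if for every closed set $F$ and every point $x\notin F$ there exist disjoint $SC^*$-open sets $U,V$ with $F\subseteq U$ and $x\in V$. *)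

From HB Require Import structures.
From mathcomp Require Import all_boot all_order.
From mathcomp Require Import all_classical all_reals.
From mathcomp Require Import topology.
Set Implicit Arguments. Unset Strict Implicit. Unset Printing Implicit Defensive.
Local Open Scope classical_set_scope.

Section SCstar.
Variable Z : topologicalType.

Definition semi_open (A : set Z) : Prop := A `<=` closure (interior A).
Definition semi_closed (A : set Z) : Prop := semi_open (~` A).

Definition scl (A : set Z) : set Z :=
  \bigcap_(F in [set F | semi_closed F /\ A `<=` F]) F.

Definition cstar_open (A : set Z) : Prop :=
  interior (closure A) `<=` A /\ A `<=` closure (interior A).

Definition SCstar_closed (A : set Z) : Prop :=
  forall U : set Z, A `<=` U -> cstar_open U -> scl A `<=` U.

Definition SCstar_open (A : set Z) : Prop := SCstar_closed (~` A).

Definition SCstar_regular : Prop :=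
  forall (F : set Z) (x : Z), closed F -> ~ F x ->
    exists U V : set Z, SCstar_open U /\ SCstar_open V /\
      U `&` V = set0 /\ F `<=` U /\ V x.
End SCstar.

Definition SCstar_irresolute (X Y : topologicalType) (f : X -> Y) : Prop :=
  forall N : set Y, SCstar_open N -> SCstar_open (f @^-1` N).

Definition closed_map (X Y : topologicalType) (f : X -> Y) : Prop :=
  forall C : set X, closed C -> closed (f @` C).

(* A closed map sends the closed set F to a closed set, and injectivity keeps
   f x outside f(F).  Separating f(F) from f x in Y and pulling the two sets
   back along f separates F from x; irresoluteness is exactly what makes the
   pulled-back sets SC*-open again. *)

From mathcomp Require Import all_boot all_classical topology.
Local Open Scope classical_set_scope.

Definition separates_closed_points {T : topologicalType} (P : set T -> Prop) :=
  forall (F : set T) (x : T), closed F -> ~ F x ->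
    exists U V : set T, P U /\ P V /\ U `&` V = set0 /\ F `<=` U /\ V x.

Lemma SCstar_regularE (T : topologicalType) :
  SCstar_regular T = separates_closed_points (@SCstar_open T).
Proof. by []. Qed.

Lemma separates_closed_points_preimage (X Y : topologicalType) (f : X -> Y)
    (P : set Y -> Prop) (Q : set X -> Prop) :
  closed_map f -> injective f -> (forall N, P N -> Q (f @^-1` N)) ->
  separates_closed_points P -> separates_closed_points Q.
Proof.
move=> closed_f inj_f PQ sepY F x closedF Fx.
have fFx : ~ (f @` F) (f x) by rewrite image_inj.
have [U [V [PU [PV [UV0 [fFU Vfx]]]]]] := sepY _ _ (closed_f F closedF) fFx.
exists (f @^-1` U), (f @^-1` V); split; first exact: PQ.
split; first exact: PQ.
split; first by rewrite -preimage_setI UV0 preimage_set0.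
by split=> // z Fz; apply: fFU; exists z.
Qed.

Theorem corollary5p4 (X Y : topologicalType) (f : X -> Y) :
  closed_map f -> injective f -> SCstar_irresolute f ->
  SCstar_regular Y -> SCstar_regular X.
Proof.
rewrite !SCstar_regularE => closed_f inj_f irr_f.
exact: separates_closed_points_preimage closed_f inj_f irr_f.
Qed.
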